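(* Let $(a_j)_{j\in\mathbb{N}_0}$ be a complex sequence with $\sum_j|a_j|<\infty$, let $(b_j)_{j\in\mathbb{N}_0}$ be a strictly increasing sequence of positive reals with $b_j\to\infty$, set $b_{-1}=0$ and $\Delta b_j=\min(b_j-b_{j-1},b_{j+1}-b_j)$, and let $f(t)=\sum_{j=0}^\infty a_je^{i b_jt}$. If for some $\alpha\in\,]0,1[$ the function $f$ is Hölder continuous of order $\alpha$ at some point $t_0\in\mathbb{R}$, then $\sup_j|a_j|(\Delta b_j)^\alpha<\infty$.
   Context: A function $g\colon\mathbb{R}\to\mathbb{C}$ is Hölder continuous of order $\alpha$ at $t_0$ if there exist constants $L>0$, $\eta>0$ such that $|g(t)-g(t_0)|\le L|t-t_0|^\alpha$ for all $t\in\,]t_0-\eta,t_0+\eta[$. *)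

From Stdlib Require Import Reals Lra.
Open Scope R_scope.

Definition Cx := (R * R)%type.
Definition Cadd (z w : Cx) : Cx := (fst z + fst w, snd z + snd w).
Definition Csub (z w : Cx) : Cx := (fst z - fst w, snd z - snd w).
Definition Cmul (z w : Cx) : Cx :=
  (fst z * fst w - snd z * snd w, fst z * snd w + snd z * fst w).
Definition Cnorm (z : Cx) : R := sqrt (fst z ^ 2 + snd z ^ 2).
Definition Cexpi (theta : R) : Cx := (cos theta, sin theta).

Definition Ccv (u : nat -> Cx) (l : Cx) : Prop :=
  Un_cv (fun n => fst (u n)) (fst l) /\ Un_cv (fun n => snd (u n)) (snd l).

Fixpoint Csum (u : nat -> Cx) (n : nat) : Cx :=
  match n with
  | O => u O
  | S m => Cadd (Csum u m) (u (S m))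
  end.

Definition rpow (x a : R) : R := if Req_EM_T x 0 then 0 else Rpower x a.

Definition holder_at (g : R -> Cx) (alpha t0 : R) : Prop :=
  exists L eta, 0 < L /\ 0 < eta /\
    forall t, t0 - eta < t < t0 + eta ->
      Cnorm (Csub (g t) (g t0)) <= L * rpow (Rabs (t - t0)) alpha.

(* b_{-1} = 0 *)
Definition bext (b : nat -> R) (j : nat) : R :=
  match j with O => 0 | S k => b k end.
Definition Delta_b (b : nat -> R) (j : nat) : R :=
  Rmin (b j - bext b j) (b (S j) - b j).

From Stdlib Require Import Reals Lra Lia Psatz.
From Coquelicot Require Import Coquelicot.
Open Scope R_scope.

(* Fix j and put beta = b_j, d = Delta b_j.  Against the kernel (1 - cos (d s)) / s^2 on
   ]0, +oo[, the function cos (xi s) integrates to c/2 (|xi + d| + |xi - d| - 2 |xi|), where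
   c = int_0^oo (1 - cos u) / u^2 du; this tent vanishes for |xi| >= d and equals 2 d at 0.
   Take h(s) = Re (conj a_j times the symmetric difference of e^{-i beta t} (f t - f t0) at
   t = t0 +- s).  The frequencies of the demodulated series are b_k - beta and beta, so the
   gap condition leaves only the j-th term: int h(s) (1 - cos (d s)) / s^2 ds = c d |a_j|^2.
   On the other hand |h(s)| <= |a_j| L s^alpha near 0 and |h| <= 2 |a_j| sum |a_k| everywhere;
   splitting the integral at 1/d and eta gives O(|a_j| (L d^(1-alpha) + sum |a_k| / eta)).
   Hence |a_j| d^alpha = O(1) once d >= max 1 (2/eta), and smaller gaps are trivial.  To work
   with proper integrals and finite sums, everything is done on [r, B] for a partial sum of
   the series, and the resulting errors are made arbitrarily small. *)

Lemma sin_sqr_le_sqr y : sin y ^ 2 <= y ^ 2.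
Proof.
  assert (Hpos : forall z, 0 <= z -> sin z ^ 2 <= z ^ 2).
  { intros z Hz. destruct (Req_dec z 0) as [->|Hz0]; [rewrite sin_0; lra|].
    pose proof (sin_lt_x z ltac:(lra)). pose proof (SIN_bound z).
    destruct (Rle_lt_dec 1 z); [nra|].
    assert (0 <= sin z) by (apply sin_ge_0; pose proof PI2_3_2; lra). nra. }
  destruct (Rle_lt_dec 0 y); [auto|].
  replace (sin y ^ 2) with (sin (- y) ^ 2) by (rewrite sin_neg; ring).
  replace (y ^ 2) with ((- y) ^ 2) by ring. apply Hpos; lra.
Qed.

Lemma one_minus_cos_bounds x : 0 <= 1 - cos x <= x ^ 2 / 2 /\ 1 - cos x <= 2.
Proof.
  assert (Hc : cos x = 1 - 2 * sin (x / 2) * sin (x / 2)).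
  { replace x with (2 * (x / 2)) at 1 by field. apply cos_2a_sin. }
  pose proof (sin_sqr_le_sqr (x / 2)). pose proof (COS_bound x).
  rewrite Hc. repeat split; nra.
Qed.

Lemma Rpower_pos x e : 0 < Rpower x e.
Proof. apply exp_pos. Qed.

Lemma Rpower_inv_base x e : 0 < x -> Rpower (/ x) e = / Rpower x e.
Proof.
  intros. unfold Rpower. rewrite ln_Rinv by auto. rewrite <- exp_Ropp. f_equal. ring.
Qed.

Lemma Rpower_minus_1 x e : 0 < x -> Rpower x (e - 1) = Rpower x e / x.
Proof. intros. unfold Rminus. rewrite Rpower_plus, Rpower_Ropp, Rpower_1; auto. Qed.

Lemma Rpower_minus_2 x e : 0 < x -> Rpower x (e - 2) = Rpower x e / x ^ 2.
Proof.
  intros. unfold Rminus. rewrite Rpower_plus, Rpower_Ropp.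
  replace 2 with (INR 2) at 1 by (simpl; ring). rewrite Rpower_pow; auto.
Qed.

Lemma Rpower_le_Rmax_1 x e : 0 < x -> 0 <= e <= 1 -> Rpower x e <= Rmax 1 x.
Proof.
  intros Hx He. destruct (Rle_lt_dec x 1).
  - apply Rle_trans with (Rpower 1 e); [apply Rle_Rpower_l; lra|].
    unfold Rpower. rewrite ln_1, Rmult_0_r, exp_0. apply Rmax_l.
  - apply Rle_trans with (Rpower x 1); [apply Rle_Rpower; lra|].
    rewrite Rpower_1 by lra. apply Rmax_r.
Qed.

Lemma rpow_Rpower x e : 0 < x -> rpow x e = Rpower x e.
Proof. intros. unfold rpow. destruct (Req_EM_T x 0); [lra | reflexivity]. Qed.

Lemma le_of_forall_le_add_eps x y k :
  0 <= k -> (forall eps, 0 < eps -> x <= y + eps * k) -> x <= y.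
Proof.
  intros Hk Hle. destruct (Rle_lt_dec x y) as [|Hlt]; auto.
  specialize (Hle ((x - y) / (2 * (k + 1))) ltac:(apply Rdiv_lt_0_compat; lra)).
  assert ((x - y) / (2 * (k + 1)) * k <= (x - y) / 2).
  { apply Rmult_le_reg_r with (2 * (k + 1)); [lra|].
    replace ((x - y) / (2 * (k + 1)) * k * (2 * (k + 1))) with ((x - y) * k) by (field; lra).
    nra. }
  lra.
Qed.

Lemma Rabs_half_sum_le u v K : Rabs u <= K -> Rabs v <= K -> Rabs ((u + v) / 2) <= K.
Proof.
  intros Hu Hv. apply Rabs_le_between in Hu, Hv. apply Rabs_le_between. lra.
Qed.

Lemma sandwich_cancel n c d A I Q e :
  0 <= n -> 0 < A <= d -> 0 <= e -> 0 <= Q ->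
  n ^ 2 * c * d - 2 * n * e <= I -> A / d * I <= n * Q -> c * n * A <= Q + 2 * e.
Proof.
  intros Hn HA He HQ Hlow Hup.
  destruct Hn as [Hn|<-]; [|rewrite Rmult_0_r, Rmult_0_l; lra].
  assert (HAd : 0 < A / d <= 1).
  { split; [apply Rdiv_lt_0_compat; lra|]. apply Rmult_le_reg_r with d; [lra|].
    unfold Rdiv. rewrite Rmult_assoc, Rinv_l; lra. }
  apply Rmult_le_reg_l with n; [auto|].
  apply (Rmult_le_compat_l (A / d)) in Hlow; [|lra].
  replace (A / d * (n ^ 2 * c * d - 2 * n * e)) with (n * (c * n * A) - A / d * (n * (2 * e)))
    in Hlow by (field; lra).
  assert (A / d * (n * (2 * e)) <= n * (2 * e)).
  { rewrite <- (Rmult_1_l (n * (2 * e))) at 2. apply Rmult_le_compat_r; nra. }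
  nra.
Qed.

Lemma segment_pos x y z : 0 < x -> 0 < y -> Rmin x y <= z <= Rmax x y -> 0 < z.
Proof. unfold Rmin, Rmax. destruct (Rle_dec x y); lra. Qed.

Lemma exists_truncation Lam d eta eps : 0 <= Lam -> 0 < d -> 0 < eps ->
  exists x y, 0 < x < / d /\ eta < y /\ Lam * x + 4 / y <= eps.
Proof.
  intros HLam Hd Heps.
  assert (Hy : 0 < 8 / eps) by (apply Rdiv_lt_0_compat; lra).
  exists (Rmin (/ (2 * d)) (eps / (2 * (Lam + 1)))), (Rabs eta + 8 / eps).
  split; [split|split].
  - apply Rmin_glb_lt; [apply Rinv_0_lt_compat | apply Rdiv_lt_0_compat]; lra.
  - eapply Rle_lt_trans; [apply Rmin_l | apply Rinv_lt_contravar; nra].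
  - pose proof (Rle_abs eta). lra.
  - assert (Lam * Rmin (/ (2 * d)) (eps / (2 * (Lam + 1))) <= eps / 2).
    { apply Rle_trans with (Lam * (eps / (2 * (Lam + 1)))).
      - apply Rmult_le_compat_l; [lra | apply Rmin_r].
      - apply Rmult_le_reg_r with (2 * (Lam + 1)); [lra|].
        replace (Lam * (eps / (2 * (Lam + 1))) * (2 * (Lam + 1))) with (Lam * eps) by (field; lra).
        nra. }
    assert (4 / (Rabs eta + 8 / eps) <= eps / 2).
    { apply Rle_trans with (4 / (8 / eps)); [|right; field; lra].
      apply Rmult_le_compat_l; [lra|]. apply Rinv_le_contravar; [lra|].
      pose proof (Rabs_pos eta). lra. }
    lra.
Qed.

(** * Riemann integrals of real functions *)

(* Coquelicot states these for an abstract normed module, with [plus] and [scal];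
   the restatements for real functions below can be used with [rewrite]. *)
Lemma RInt_plus_R (f g : R -> R) x y : ex_RInt f x y -> ex_RInt g x y ->
  RInt (fun s => f s + g s) x y = RInt f x y + RInt g x y.
Proof. exact (RInt_plus f g x y). Qed.

Lemma RInt_minus_R (f g : R -> R) x y : ex_RInt f x y -> ex_RInt g x y ->
  RInt (fun s => f s - g s) x y = RInt f x y - RInt g x y.
Proof. exact (RInt_minus f g x y). Qed.

Lemma RInt_scal_R (f : R -> R) x y k : ex_RInt f x y ->
  RInt (fun s => k * f s) x y = k * RInt f x y.
Proof. exact (RInt_scal f x y k). Qed.

Lemma RInt_const_R x y (c : R) : (RInt (fun _ => c) x y : R) = (y - x) * c.
Proof. exact (RInt_const x y c). Qed.

Lemma RInt_ext_R (f g : R -> R) x y :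
  (forall s, Rmin x y < s < Rmax x y -> f s = g s) -> (RInt f x y : R) = RInt g x y.
Proof. apply RInt_ext. Qed.

Lemma RInt_Chasles_R (f : R -> R) x y z : ex_RInt f x y -> ex_RInt f y z ->
  RInt f x y + RInt f y z = RInt f x z.
Proof. exact (RInt_Chasles f x y z). Qed.

Lemma ex_RInt_plus_R (f g : R -> R) x y :
  ex_RInt f x y -> ex_RInt g x y -> ex_RInt (fun s => f s + g s) x y.
Proof. exact (ex_RInt_plus f g x y). Qed.

Lemma ex_RInt_minus_R (f g : R -> R) x y :
  ex_RInt f x y -> ex_RInt g x y -> ex_RInt (fun s => f s - g s) x y.
Proof. exact (ex_RInt_minus f g x y). Qed.

Lemma ex_RInt_scal_R (f : R -> R) x y k : ex_RInt f x y -> ex_RInt (fun s => k * f s) x y.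
Proof. exact (ex_RInt_scal f x y k). Qed.

Lemma ex_RInt_of_derivable (f : R -> R) x y :
  0 < x -> 0 < y -> (forall z, 0 < z -> ex_derive f z) -> ex_RInt f x y.
Proof.
  intros Hx Hy Hd. apply (ex_RInt_continuous (V := R_CompleteNormedModule)).
  intros z Hz. apply (ex_derive_continuous (K := R_AbsRing) (V := R_NormedModule)).
  apply Hd, (segment_pos x y); auto.
Qed.

Lemma RInt_two_div_sqr x y : 0 < x -> 0 < y -> RInt (fun u => 2 / u ^ 2) x y = 2 / x - 2 / y.
Proof.
  intros Hx Hy. apply is_RInt_unique.
  replace (2 / x - 2 / y) with (minus ((fun u => - 2 / u) y) ((fun u => - 2 / u) x))
    by (unfold minus, plus, opp; simpl; field; lra).
  apply (is_RInt_derive (V := R_CompleteNormedModule)).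
  - intros z Hz. assert (0 < z) by (apply (segment_pos x y); auto).
    auto_derive; [lra | field; lra].
  - intros z Hz. assert (0 < z) by (apply (segment_pos x y); auto).
    apply (ex_derive_continuous (K := R_AbsRing) (V := R_NormedModule)). auto_derive. nra.
Qed.

Lemma ex_RInt_two_div_sqr x y : 0 < x -> 0 < y -> ex_RInt (fun u => 2 / u ^ 2) x y.
Proof. intros. apply ex_RInt_of_derivable; auto. intros. auto_derive. nra. Qed.

Lemma RInt_Rpower x y e : 0 < x -> 0 < y -> e + 1 <> 0 ->
  ex_RInt (fun s => Rpower s e) x y /\
  RInt (fun s => Rpower s e) x y = (Rpower y (e + 1) - Rpower x (e + 1)) / (e + 1).
Proof.
  intros Hx Hy He.
  assert (Hd : forall z, 0 < z -> is_derive (fun s => / (e + 1) * Rpower s (e + 1)) z (Rpower z e)).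
  { intros z Hz. replace (Rpower z e) with (/ (e + 1) * ((e + 1) * Rpower z (e + 1 - 1)))
      by (replace (e + 1 - 1) with e by ring; field; auto).
    apply is_derive_scal, is_derive_Reals, derivable_pt_lim_power; auto. }
  assert (Hint : is_RInt (fun s => Rpower s e) x y
     (minus ((fun s => / (e + 1) * Rpower s (e + 1)) y)
            ((fun s => / (e + 1) * Rpower s (e + 1)) x))).
  { apply (is_RInt_derive (V := R_CompleteNormedModule) (fun s => / (e + 1) * Rpower s (e + 1))).
    - intros z Hz. apply Hd, (segment_pos x y); auto.
    - intros z Hz. apply (ex_derive_continuous (K := R_AbsRing) (V := R_NormedModule)).
      eexists. apply is_derive_Reals, derivable_pt_lim_power, (segment_pos x y); auto. }
  split; [eexists; eauto|].
  rewrite (is_RInt_unique _ _ _ _ Hint). unfold minus, plus, opp; simpl. field; auto.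
Qed.

(** * The kernel [(1 - cos (d s)) / s^2] *)

Definition fejer (d s : R) : R := (1 - cos (d * s)) / s ^ 2.

Lemma fejer_bounds d s : 0 < s ->
  0 <= fejer d s /\ fejer d s <= d ^ 2 / 2 /\ fejer d s <= 2 / s ^ 2.
Proof.
  intros Hs. destruct (one_minus_cos_bounds (d * s)) as [[Hge Hsq] Htwo]. unfold fejer.
  assert (0 < s ^ 2) by nra.
  repeat split.
  - apply Rdiv_le_0_compat; lra.
  - apply Rmult_le_reg_r with (s ^ 2); auto. unfold Rdiv. rewrite Rmult_assoc, Rinv_l by lra.
    nra.
  - unfold Rdiv. apply Rmult_le_compat_r; [left; apply Rinv_0_lt_compat|]; lra.
Qed.

Lemma fejer_Rabs d s : fejer (Rabs d) s = fejer d s.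
Proof.
  unfold fejer. unfold Rabs. destruct (Rcase_abs d); auto.
  replace (- d * s) with (- (d * s)) by ring. rewrite cos_neg. reflexivity.
Qed.

Lemma ex_RInt_fejer d x y : 0 < x -> 0 < y -> ex_RInt (fejer d) x y.
Proof. intros. apply ex_RInt_of_derivable; auto. intros. unfold fejer. auto_derive. nra. Qed.

Lemma ex_RInt_cos_fejer xi d x y : 0 < x -> 0 < y ->
  ex_RInt (fun s => cos (xi * s) * fejer d s) x y.
Proof. intros. apply ex_RInt_of_derivable; auto. intros. unfold fejer. auto_derive. nra. Qed.

Lemma RInt_fejer1_bounds x y : 0 < x <= y ->
  0 <= RInt (fejer 1) x y /\ RInt (fejer 1) x y <= (y - x) / 2 /\
  RInt (fejer 1) x y <= 2 / x - 2 / y.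
Proof.
  intros Hxy. assert (Hex := ex_RInt_fejer 1 x y ltac:(lra) ltac:(lra)).
  repeat split.
  - apply Rle_trans with (RInt (fun _ => 0) x y); [rewrite RInt_const_R; lra|].
    apply RInt_le; [lra | apply ex_RInt_const | auto |].
    intros s Hs. apply fejer_bounds; lra.
  - apply Rle_trans with (RInt (fun _ => 1 / 2) x y); [|rewrite RInt_const_R; lra].
    apply RInt_le; [lra | auto | apply ex_RInt_const |].
    intros s Hs. destruct (fejer_bounds 1 s) as [_ [Hhalf _]]; lra.
  - rewrite <- RInt_two_div_sqr by lra.
    apply RInt_le; [lra | auto | apply ex_RInt_two_div_sqr; lra |].
    intros s Hs. apply fejer_bounds; lra.
Qed.

Lemma RInt_fejer1_Chasles x y z : 0 < x -> 0 < y -> 0 < z ->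
  RInt (fejer 1) x y + RInt (fejer 1) y z = RInt (fejer 1) x z.
Proof. intros. apply RInt_Chasles_R; apply ex_RInt_fejer; auto. Qed.

Lemma RInt_fejer1_mono x y x' y' : 0 < x' <= x -> x <= y -> y <= y' ->
  RInt (fejer 1) x y <= RInt (fejer 1) x' y'.
Proof.
  intros. rewrite <- (RInt_fejer1_Chasles x' x y'), <- (RInt_fejer1_Chasles x y y') by lra.
  pose proof (RInt_fejer1_bounds x' x). pose proof (RInt_fejer1_bounds y y'). lra.
Qed.

Definition fejer_masses (v : R) : Prop :=
  exists x y, 0 < x <= y /\ v = RInt (fejer 1) x y.

Lemma fejer_masses_le x y v : 0 < x <= y -> fejer_masses v ->
  v <= RInt (fejer 1) x y + x / 2 + 2 / y.
Proof.
  intros Hxy [x' [y' [Hx' ->]]].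
  set (m := Rmin x x'). set (M := Rmax y y').
  assert (0 < m <= x /\ m <= x') by (unfold m, Rmin; destruct (Rle_dec x x'); lra).
  assert (y <= M /\ y' <= M) by (unfold M, Rmax; destruct (Rle_dec y y'); lra).
  apply Rle_trans with (RInt (fejer 1) m M); [apply RInt_fejer1_mono; lra|].
  rewrite <- (RInt_fejer1_Chasles m x M), <- (RInt_fejer1_Chasles x y M) by lra.
  pose proof (RInt_fejer1_bounds m x). pose proof (RInt_fejer1_bounds y M).
  assert (0 < 2 / M) by (apply Rdiv_lt_0_compat; lra). lra.
Qed.

Lemma fejer_masses_bound : bound fejer_masses.
Proof.
  exists (RInt (fejer 1) 1 1 + 1 / 2 + 2 / 1). intros v Hv. apply fejer_masses_le; auto; lra.
Qed.

Lemma fejer_masses_inhabited : exists v, fejer_masses v.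
Proof. exists (RInt (fejer 1) 1 1), 1, 1. split; auto; lra. Qed.

(* The improper integral of [(1 - cos u) / u^2] over [0, +oo[ (it equals pi/2),
   obtained as a supremum so that only proper integrals occur. *)
Definition fejer_const : R :=
  proj1_sig (completeness fejer_masses fejer_masses_bound fejer_masses_inhabited).

Lemma fejer_const_spec x y : 0 < x <= y ->
  RInt (fejer 1) x y <= fejer_const <= RInt (fejer 1) x y + x / 2 + 2 / y.
Proof.
  intros Hxy. unfold fejer_const.
  destruct (completeness _ _ _) as [m [Hub Hlub]]; simpl. split.
  - apply Hub. exists x, y; auto.
  - apply Hlub. intros v Hv. apply fejer_masses_le; auto.
Qed.

Lemma fejer_const_pos : 0 < fejer_const.
Proof.
  apply Rlt_le_trans with (RInt (fejer 1) 1 2); [|apply fejer_const_spec; lra].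
  assert (Hs : 0 < sin (1 / 2)) by (apply sin_gt_0; pose proof PI2_3_2; lra).
  assert (Hc1 : cos 1 = 1 - 2 * sin (1 / 2) * sin (1 / 2)).
  { replace 1 with (2 * (1 / 2)) at 1 by field. apply cos_2a_sin. }
  apply Rlt_le_trans with (RInt (fun _ => (1 - cos 1) / 4) 1 2); [rewrite RInt_const_R; nra|].
  apply RInt_le; [lra | apply ex_RInt_const | apply ex_RInt_fejer; lra |].
  intros z Hz. unfold fejer. rewrite Rmult_1_l.
  assert (cos z <= cos 1) by (apply cos_decr_1; pose proof PI2_3_2; lra).
  assert (/ 4 <= / z ^ 2) by (apply Rinv_le_contravar; nra).
  unfold Rdiv. apply Rmult_le_compat; nra.
Qed.

Lemma RInt_fejer_scale a x y : 0 < a -> 0 < x -> 0 < y ->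
  RInt (fejer a) x y = a * RInt (fejer 1) (a * x) (a * y).
Proof.
  intros Ha Hx Hy.
  rewrite <- (Rplus_0_r (a * x)), <- (Rplus_0_r (a * y)).
  rewrite <- (RInt_comp_lin (fejer 1)) by (apply ex_RInt_fejer; nra).
  rewrite <- RInt_scal_R.
  - apply RInt_ext. intros z Hz. assert (0 < z) by (apply (segment_pos x y); lra).
    unfold fejer, scal; simpl; unfold mult; simpl. rewrite Rplus_0_r, Rmult_1_l. field; lra.
  - apply ex_RInt_of_derivable; auto. intros z Hz.
    unfold fejer, scal; simpl; unfold mult; simpl. auto_derive.
    assert (0 < a * z) by nra. intro; nra.
Qed.

Lemma RInt_fejer_approx a x y : 0 < x <= y ->
  Rabs (RInt (fejer a) x y - Rabs a * fejer_const) <= a ^ 2 * x / 2 + 2 / y.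
Proof.
  intros Hxy. assert (0 < 2 / y) by (apply Rdiv_lt_0_compat; lra).
  rewrite <- (RInt_ext (fejer (Rabs a))) by (intros; apply fejer_Rabs).
  replace (a ^ 2) with (Rabs a ^ 2) by (rewrite <- Rsqr_pow2, <- Rsqr_abs; apply Rsqr_pow2).
  destruct (Rabs_pos a) as [Ha|Ha]; [|rewrite <- Ha].
  - rewrite RInt_fejer_scale by lra.
    destruct (fejer_const_spec (Rabs a * x) (Rabs a * y)) as [Hlo Hhi]; [split; nra|].
    replace (Rabs a ^ 2 * x / 2 + 2 / y)
      with (Rabs a * (Rabs a * x / 2 + 2 / (Rabs a * y))) by (field; lra).
    apply Rabs_le_between. split; nra.
  - rewrite (RInt_ext _ (fun _ => 0))
      by (intros; unfold fejer; rewrite Rmult_0_l, cos_0, Rminus_diag; apply Rdiv_0_l).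
    rewrite RInt_const_R, Rabs_left1 by lra. nra.
Qed.

Lemma RInt_cos_fejer xi d x y : 0 < x -> 0 < y ->
  (RInt (fun s => cos (xi * s) * fejer d s) x y : R) =
  (RInt (fejer (xi + d)) x y + RInt (fejer (xi - d)) x y) / 2 - RInt (fejer xi) x y.
Proof.
  intros Hx Hy.
  rewrite (RInt_ext_R _ (fun s => / 2 * (fejer (xi + d) s + fejer (xi - d) s) - fejer xi s)).
  - assert (Hp : ex_RInt (fun s => fejer (xi + d) s + fejer (xi - d) s) x y)
      by (apply ex_RInt_plus_R; apply ex_RInt_fejer; auto).
    rewrite RInt_minus_R, RInt_scal_R, RInt_plus_R by
      (auto using ex_RInt_fejer, ex_RInt_scal_R).
    field.
  - intros s Hs. assert (0 < s) by (apply (segment_pos x y); lra). unfold fejer.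
    replace ((xi + d) * s) with (xi * s + d * s) by ring.
    replace ((xi - d) * s) with (xi * s - d * s) by ring.
    rewrite cos_plus, cos_minus. field. lra.
Qed.

Definition tent (d xi : R) : R := Rabs (xi + d) + Rabs (xi - d) - 2 * Rabs xi.

Lemma tent_0 d : 0 < d -> tent d 0 = 2 * d.
Proof. intros. unfold tent. rewrite Rplus_0_l, Rminus_0_l, Rabs_Ropp, Rabs_R0, Rabs_right; lra. Qed.

Lemma tent_far d xi : 0 < d -> d <= Rabs xi -> tent d xi = 0.
Proof.
  unfold tent, Rabs.
  destruct (Rcase_abs xi), (Rcase_abs (xi + d)), (Rcase_abs (xi - d)); lra.
Qed.

Lemma RInt_cos_fejer_approx xi d x y : 0 < x <= y -> 0 < d ->
  Rabs (RInt (fun s => cos (xi * s) * fejer d s) x y - fejer_const / 2 * tent d xi)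
  <= (Rabs xi + d) ^ 2 * x + 4 / y.
Proof.
  intros Hxy Hd. rewrite RInt_cos_fejer by lra. unfold tent.
  pose proof (proj1 (Rabs_le_between _ _) (RInt_fejer_approx (xi + d) x y Hxy)).
  pose proof (proj1 (Rabs_le_between _ _) (RInt_fejer_approx (xi - d) x y Hxy)).
  pose proof (proj1 (Rabs_le_between _ _) (RInt_fejer_approx xi x y Hxy)).
  assert (Hplus : (xi + d) ^ 2 <= (Rabs xi + d) ^ 2).
  { apply pow_maj_Rabs. pose proof (Rabs_triang xi d). rewrite (Rabs_right d) in * by lra. lra. }
  assert (Hminus : (xi - d) ^ 2 <= (Rabs xi + d) ^ 2).
  { apply pow_maj_Rabs. pose proof (Rabs_triang xi (- d)).
    rewrite Rabs_Ropp, (Rabs_right d) in * by lra. unfold Rminus. lra. }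
  assert (Hzero : xi ^ 2 <= (Rabs xi + d) ^ 2) by (apply pow_maj_Rabs; lra).
  assert (Hx : 0 <= x / 2) by lra.
  pose proof (Rmult_le_compat_r _ _ _ Hx Hplus). pose proof (Rmult_le_compat_r _ _ _ Hx Hminus).
  pose proof (Rmult_le_compat_r _ _ _ Hx Hzero).
  assert (4 / y = 2 * (2 / y)) by (field; lra).
  apply Rabs_le_between. split; lra.
Qed.

Lemma RInt_sum_cos_fejer (c xi : nat -> R) d x y N : 0 < x -> 0 < y ->
  ex_RInt (fun s => sum_f_R0 (fun k => c k * cos (xi k * s)) N * fejer d s) x y /\
  (RInt (fun s => sum_f_R0 (fun k => c k * cos (xi k * s)) N * fejer d s) x y : R)
  = sum_f_R0 (fun k => c k * RInt (fun s => cos (xi k * s) * fejer d s) x y) N.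
Proof.
  intros Hx Hy.
  assert (Hterm : forall k, ex_RInt (fun s => c k * (cos (xi k * s) * fejer d s)) x y)
    by (intros; apply ex_RInt_scal_R, ex_RInt_cos_fejer; auto).
  induction N as [|N [IHex IHeq]]; simpl.
  - split.
    + eapply ex_RInt_ext; [|apply (Hterm 0%nat)]. intros; simpl; ring.
    + rewrite <- RInt_scal_R by (apply ex_RInt_cos_fejer; auto).
      apply RInt_ext_R. intros. ring.
  - assert (E : forall s,
      sum_f_R0 (fun k => c k * cos (xi k * s)) N * fejer d s
      + c (S N) * (cos (xi (S N) * s) * fejer d s)
      = (sum_f_R0 (fun k => c k * cos (xi k * s)) N + c (S N) * cos (xi (S N) * s)) * fejer d s)
      by (intros; ring).
    split.
    + eapply ex_RInt_ext; [intros s _; apply E|]. apply ex_RInt_plus_R; auto.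
    + rewrite <- (RInt_ext_R _ _ _ _ (fun s _ => E s)), RInt_plus_R, IHeq, RInt_scal_R; auto.
      apply ex_RInt_cos_fejer; auto.
Qed.

Section FejerWeightedIntegral.

Variables (g : R -> R) (d : R).
Hypothesis g_integrable : forall x y, 0 < x -> 0 < y -> ex_RInt (fun s => g s * fejer d s) x y.

Lemma mul_fejer_le s U V : 0 < s -> Rabs (g s) <= U -> (0 <= U -> fejer d s <= V) ->
  g s * fejer d s <= U * V.
Proof.
  intros Hs Hg HV. destruct (fejer_bounds d s Hs) as [Hfej _].
  assert (HU : 0 <= U) by (pose proof (Rabs_pos (g s)); lra). specialize (HV HU).
  apply Rle_trans with (Rabs (g s) * fejer d s).
  - apply Rmult_le_compat_r; auto. apply Rle_abs.
  - apply Rmult_le_compat; auto. apply Rabs_pos.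
Qed.

Lemma RInt_mul_fejer_le_const x y C : 0 < x <= y ->
  (forall s, x < s < y -> Rabs (g s) <= C) ->
  RInt (fun s => g s * fejer d s) x y <= (y - x) * (C * (d ^ 2 / 2)).
Proof.
  intros Hxy Hg. rewrite <- RInt_const_R.
  apply RInt_le; [lra | apply g_integrable; lra | apply ex_RInt_const |].
  intros s Hs. apply mul_fejer_le; [lra | apply Hg; lra |]. intros. apply fejer_bounds; lra.
Qed.

Lemma RInt_mul_fejer_le_tail x y M : 0 < x <= y ->
  (forall s, x < s < y -> Rabs (g s) <= M) ->
  RInt (fun s => g s * fejer d s) x y <= M * (2 / x - 2 / y).
Proof.
  intros Hxy Hg. rewrite <- RInt_two_div_sqr by lra.
  rewrite <- RInt_scal_R by (apply ex_RInt_two_div_sqr; lra).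
  apply RInt_le; [lra | apply g_integrable; lra | apply ex_RInt_scal_R, ex_RInt_two_div_sqr; lra |].
  intros s Hs. apply mul_fejer_le; [lra | apply Hg; lra |]. intros. apply fejer_bounds; lra.
Qed.

Lemma RInt_mul_fejer_le_holder x y Lg e alpha : 0 < x <= y -> 0 < alpha < 1 ->
  (forall s, x < s < y -> Rabs (g s) <= Lg * Rpower s alpha + e) ->
  RInt (fun s => g s * fejer d s) x y <=
  2 * Lg * (Rpower x (alpha - 1) - Rpower y (alpha - 1)) / (1 - alpha) + e * (2 / x - 2 / y).
Proof.
  intros Hxy Ha Hg.
  destruct (RInt_Rpower x y (alpha - 2)) as [Hpe Hpv]; try lra.
  replace (alpha - 2 + 1) with (alpha - 1) in Hpv by ring.
  apply Rle_trans with
    (RInt (fun s => 2 * Lg * Rpower s (alpha - 2) + e * (2 / s ^ 2)) x y).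
  - apply RInt_le; [lra | apply g_integrable; lra | |].
    { apply ex_RInt_plus_R; apply ex_RInt_scal_R; auto. apply ex_RInt_two_div_sqr; lra. }
    intros s Hs. rewrite Rpower_minus_2 by lra.
    replace (2 * Lg * (Rpower s alpha / s ^ 2) + e * (2 / s ^ 2))
      with ((Lg * Rpower s alpha + e) * (2 / s ^ 2)) by (field; lra).
    apply mul_fejer_le; [lra | apply Hg; lra |]. intros. apply fejer_bounds; lra.
  - assert (Hie := ex_RInt_two_div_sqr x y ltac:(lra) ltac:(lra)).
    rewrite RInt_plus_R, !RInt_scal_R, Hpv, RInt_two_div_sqr by (auto using ex_RInt_scal_R; lra).
    right. field. lra.
Qed.

(* Split at [1/d] and [eta]: below [1/d] use [fejer d s <= d^2/2],
   above it [fejer d s <= 2/s^2]. *)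
Lemma RInt_mul_fejer_split_bound Lg e M alpha eta r B :
  0 < alpha < 1 -> 0 <= Lg -> 0 <= e -> 0 < d -> / d <= eta -> 0 < r < / d -> eta < B ->
  (forall s, 0 < s <= eta -> Rabs (g s) <= Lg * Rpower s alpha + e) ->
  (forall s, Rabs (g s) <= M) ->
  RInt (fun s => g s * fejer d s) r B
  <= (Lg / Rpower d alpha + e) * d / 2 + 2 * Lg * (d / Rpower d alpha) / (1 - alpha)
     + 2 * e * d + 2 * M / eta.
Proof.
  intros Ha HLg He Hd Hu Hr HB Hnear Hfar.
  set (A := Rpower d alpha). assert (HA : 0 < A) by apply Rpower_pos.
  assert (HM : 0 <= M) by (pose proof (Hfar 0); pose proof (Rabs_pos (g 0)); lra).
  assert (Hinner : RInt (fun s => g s * fejer d s) r (/ d) <= (Lg / A + e) * d / 2).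
  { apply Rle_trans with ((/ d - r) * ((Lg / A + e) * (d ^ 2 / 2))).
    - apply RInt_mul_fejer_le_const; [lra|]. intros s Hs.
      eapply Rle_trans; [apply Hnear; lra|]. apply Rplus_le_compat_r, Rmult_le_compat_l; auto.
      unfold A. rewrite <- Rpower_inv_base by lra. apply Rle_Rpower_l; lra.
    - assert (0 <= Lg / A) by (apply Rdiv_le_0_compat; lra).
      replace ((Lg / A + e) * d / 2) with (/ d * ((Lg / A + e) * (d ^ 2 / 2))) by (field; lra).
      apply Rmult_le_compat_r; nra. }
  assert (Hmiddle : RInt (fun s => g s * fejer d s) (/ d) eta
                    <= 2 * Lg * (d / A) / (1 - alpha) + 2 * e * d).
  { eapply Rle_trans; [apply (RInt_mul_fejer_le_holder (/ d) eta Lg e alpha);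
      [lra | auto | intros s Hs; apply Hnear; lra]|].
    rewrite Rpower_inv_base, Rpower_minus_1, Rinv_div by lra. fold A.
    replace (2 / / d) with (2 * d) by (field; lra).
    assert (0 <= 2 * Lg * Rpower eta (alpha - 1) / (1 - alpha))
      by (apply Rdiv_le_0_compat; [pose proof (Rpower_pos eta (alpha - 1)); nra | lra]).
    assert (0 <= e * (2 / eta)) by (apply Rmult_le_pos; [|apply Rdiv_le_0_compat]; lra).
    replace (2 * Lg * (d / A - Rpower eta (alpha - 1)) / (1 - alpha) + e * (2 * d - 2 / eta))
      with (2 * Lg * (d / A) / (1 - alpha) + 2 * e * d
            - (2 * Lg * Rpower eta (alpha - 1) / (1 - alpha) + e * (2 / eta))) by (field; lra).
    lra. }
  assert (Houter : RInt (fun s => g s * fejer d s) eta B <= 2 * M / eta).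
  { eapply Rle_trans; [apply RInt_mul_fejer_le_tail; [lra | intros; apply Hfar]|].
    assert (0 < 2 / B) by (apply Rdiv_lt_0_compat; lra). unfold Rdiv. nra. }
  rewrite <- (RInt_Chasles_R _ r (/ d) B), <- (RInt_Chasles_R _ (/ d) eta B)
    by (apply g_integrable; lra).
  lra.
Qed.

Lemma RInt_mul_fejer_holder_bound Lg e M alpha eta r B :
  0 < alpha < 1 -> 0 <= Lg -> 0 <= e -> 1 <= d -> / d <= eta -> 0 < r < / d -> eta < B ->
  (forall s, 0 < s <= eta -> Rabs (g s) <= Lg * Rpower s alpha + e) ->
  (forall s, Rabs (g s) <= M) ->
  Rpower d alpha / d * RInt (fun s => g s * fejer d s) r B
  <= Lg * (1 / 2 + 2 / (1 - alpha)) + 5 / 2 * e * Rpower d alpha + 2 * M / eta.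
Proof.
  intros Ha HLg He Hd Hu Hr HB Hnear Hfar.
  pose proof (RInt_mul_fejer_split_bound Lg e M alpha eta r B Ha HLg He ltac:(lra) Hu Hr HB
                Hnear Hfar) as Hsplit.
  set (A := Rpower d alpha) in *. assert (HA : 0 < A) by apply Rpower_pos.
  assert (HAd : 0 < A / d <= 1).
  { split; [apply Rdiv_lt_0_compat; lra|].
    apply Rmult_le_reg_r with d; [lra|]. unfold Rdiv. rewrite Rmult_assoc, Rinv_l by lra.
    rewrite Rmult_1_r, Rmult_1_l, <- (Rmax_right 1 d) by lra. apply Rpower_le_Rmax_1; lra. }
  assert (HM : 0 <= 2 * M / eta)
    by (pose proof (Hfar 0); pose proof (Rabs_pos (g 0)); apply Rdiv_le_0_compat; lra).
  apply (Rmult_le_compat_l (A / d)) in Hsplit; [|lra].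
  rewrite Rmult_plus_distr_l in Hsplit.
  replace (A / d * ((Lg / A + e) * d / 2 + 2 * Lg * (d / A) / (1 - alpha) + 2 * e * d))
    with (Lg * (1 / 2 + 2 / (1 - alpha)) + 5 / 2 * e * A) in Hsplit
    by (field; repeat split; lra).
  assert (A / d * (2 * M / eta) <= 2 * M / eta)
    by (rewrite <- (Rmult_1_l (2 * M / eta)) at 2; apply Rmult_le_compat_r; lra).
  lra.
Qed.

End FejerWeightedIntegral.


(** * Complex numbers *)

Lemma Cnorm_ge0 z : 0 <= Cnorm z.
Proof. apply sqrt_pos. Qed.

Lemma Cnorm_Cadd_le z w : Cnorm (Cadd z w) <= Cnorm z + Cnorm w.
Proof. exact (Cmod_triangle z w). Qed.

Lemma Cnorm_Csub_le z w : Cnorm (Csub z w) <= Cnorm z + Cnorm w.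
Proof. pose proof (Cmod_triangle z (Copp w)) as Htri. rewrite Cmod_opp in Htri. exact Htri. Qed.

Lemma Cnorm_Cmul z w : Cnorm (Cmul z w) = Cnorm z * Cnorm w.
Proof. exact (Cmod_mult z w). Qed.

Lemma Cnorm_Cexpi th : Cnorm (Cexpi th) = 1.
Proof.
  unfold Cnorm, Cexpi; simpl. pose proof (sin2_cos2 th). unfold Rsqr in *.
  replace (cos th * (cos th * 1) + sin th * (sin th * 1)) with 1 by lra. apply sqrt_1.
Qed.

Lemma Cnorm_sqr z : Cnorm z ^ 2 = fst z ^ 2 + snd z ^ 2.
Proof. unfold Cnorm. rewrite pow2_sqrt; nra. Qed.

Lemma Rabs_fst_le_Cnorm z : Rabs (fst z) <= Cnorm z.
Proof. unfold Cnorm. rewrite <- sqrt_Rsqr_abs. apply sqrt_le_1_alt. unfold Rsqr. nra. Qed.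

Lemma Rabs_snd_le_Cnorm z : Rabs (snd z) <= Cnorm z.
Proof. unfold Cnorm. rewrite <- sqrt_Rsqr_abs. apply sqrt_le_1_alt. unfold Rsqr. nra. Qed.

Lemma Cnorm_le_Rabs_fst_snd z : Cnorm z <= Rabs (fst z) + Rabs (snd z).
Proof.
  pose proof (Rabs_pos (fst z)). pose proof (Rabs_pos (snd z)).
  apply Rsqr_incr_0_var; [|lra].
  rewrite !Rsqr_pow2, Cnorm_sqr, <- (pow2_abs (fst z)), <- (pow2_abs (snd z)). nra.
Qed.

(* [Cproj w be t z] is the real part of [conj w * e^{-i be t} * z]. *)
Definition Cproj (w : Cx) (be t : R) (z : Cx) : R :=
  (fst w * fst z + snd w * snd z) * cos (be * t) + (fst w * snd z - snd w * fst z) * sin (be * t).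

Lemma Cproj_Cadd w be t z z' : Cproj w be t (Cadd z z') = Cproj w be t z + Cproj w be t z'.
Proof. unfold Cproj, Cadd; simpl. ring. Qed.

Lemma Cproj_Csub w be t z z' : Cproj w be t (Csub z z') = Cproj w be t z - Cproj w be t z'.
Proof. unfold Cproj, Csub; simpl. ring. Qed.

Lemma Cproj_bound w be t z : Rabs (Cproj w be t z) <= Cnorm w * Cnorm z.
Proof.
  pose proof (Cnorm_ge0 w). pose proof (Cnorm_ge0 z).
  rewrite <- (Rabs_pos_eq (Cnorm w * Cnorm z)) by nra.
  apply Rsqr_le_abs_0. rewrite !Rsqr_pow2, Rpow_mult_distr, !Cnorm_sqr. unfold Cproj.
  pose proof (sin2_cos2 (be * t)) as Hsc. unfold Rsqr in Hsc.
  set (c := cos (be * t)) in *. set (s := sin (be * t)) in *.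
  set (u := fst w * fst z + snd w * snd z). set (v := fst w * snd z - snd w * fst z).
  assert (E : (fst w ^ 2 + snd w ^ 2) * (fst z ^ 2 + snd z ^ 2) = u ^ 2 + v ^ 2)
    by (unfold u, v; ring).
  rewrite E. assert (0 <= (u * s - v * c) ^ 2) by apply pow2_ge_0.
  replace (u ^ 2 + v ^ 2) with ((u ^ 2 + v ^ 2) * (s * s + c * c)) by (rewrite Hsc; ring).
  nra.
Qed.

Lemma Cproj_self w be t : Cproj w be t (Cmul w (Cexpi (be * t))) = Cnorm w ^ 2.
Proof.
  rewrite Cnorm_sqr. unfold Cproj, Cmul, Cexpi; simpl.
  pose proof (sin2_cos2 (be * t)). unfold Rsqr in *. nra.
Qed.

Lemma Cproj_mean w be t0 s z :
  (Cproj w be (t0 + s) z + Cproj w be (t0 - s) z) / 2 = Cproj w be t0 z * cos (be * s).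
Proof.
  unfold Cproj. rewrite !Rmult_plus_distr_l, !Rmult_minus_distr_l, cos_plus, sin_plus,
    cos_minus, sin_minus. field.
Qed.

Lemma Cproj_mean_Cexpi w be t0 s c bk :
  (Cproj w be (t0 + s) (Cmul c (Cexpi (bk * (t0 + s))))
   + Cproj w be (t0 - s) (Cmul c (Cexpi (bk * (t0 - s))))) / 2
  = Cproj w be t0 (Cmul c (Cexpi (bk * t0))) * cos ((bk - be) * s).
Proof.
  unfold Cproj, Cmul, Cexpi; simpl.
  rewrite !Rmult_plus_distr_l, !Rmult_minus_distr_l, !Rmult_minus_distr_r,
    !cos_plus, !sin_plus, !cos_minus, !sin_minus.
  field.
Qed.

Lemma Delta_b_pos_le b : (forall j, 0 < b j) -> (forall j, b j < b (S j)) ->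
  forall j, 0 < Delta_b b j <= b j.
Proof.
  intros Hpos Hinc j. unfold Delta_b. split.
  - pose proof (Hinc j). apply Rmin_glb_lt; [|lra].
    destruct j; simpl; [pose proof (Hpos 0%nat) | pose proof (Hinc j)]; lra.
  - eapply Rle_trans; [apply Rmin_l|]. destruct j; simpl; [lra|]. pose proof (Hpos j). lra.
Qed.

Lemma Delta_b_le_dist b : Un_growing b -> forall j k, k <> j -> Delta_b b j <= Rabs (b k - b j).
Proof.
  intros Hb j k Hkj. unfold Delta_b. destruct (Nat.lt_gt_cases k j) as [[Hlt|Hgt] _]; [lia| |].
  - destruct j as [|m]; [lia|]. simpl.
    assert (b k <= b m) by (apply tech9; auto; lia). pose proof (Hb m).
    rewrite Rabs_left1 by lra. eapply Rle_trans; [apply Rmin_l | lra].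
  - assert (b (S j) <= b k) by (apply tech9; auto; lia). pose proof (Hb j).
    rewrite Rabs_right by lra. eapply Rle_trans; [apply Rmin_r | lra].
Qed.

Lemma Cnorm_Csum_le u N : Cnorm (Csum u N) <= sum_f_R0 (fun k => Cnorm (u k)) N.
Proof. induction N; simpl; [lra|]. eapply Rle_trans; [apply Cnorm_Cadd_le | lra]. Qed.

Lemma Cnorm_Csum_sub_le u N M : (N <= M)%nat ->
  Cnorm (Csub (Csum u M) (Csum u N))
  <= sum_f_R0 (fun k => Cnorm (u k)) M - sum_f_R0 (fun k => Cnorm (u k)) N.
Proof.
  induction 1.
  - unfold Csub, Cnorm; simpl. rewrite !Rminus_diag, Rmult_0_l, Rplus_0_l, sqrt_0. lra.
  - simpl. replace (Csub (Cadd (Csum u m) (u (S m))) (Csum u N))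
      with (Cadd (Csub (Csum u m) (Csum u N)) (u (S m)))
      by (unfold Csub, Cadd; simpl; f_equal; ring).
    eapply Rle_trans; [apply Cnorm_Cadd_le | lra].
Qed.

Lemma Un_cv_dist_le (u : nat -> R) l c tau N : Un_cv u l ->
  (forall M, (N <= M)%nat -> Rabs (u M - c) <= tau) -> Rabs (l - c) <= tau.
Proof.
  intros Hu Hb. destruct (Rle_lt_dec (Rabs (l - c)) tau) as [|Hlt]; auto.
  destruct (Hu (Rabs (l - c) - tau)) as [N0 HN0]; [lra|].
  specialize (HN0 (max N N0) ltac:(lia)). specialize (Hb (max N N0) ltac:(lia)).
  unfold R_dist in HN0. rewrite Rabs_minus_sym in HN0.
  pose proof (Rabs_triang (l - u (max N N0)) (u (max N N0) - c)).
  replace (l - u (max N N0) + (u (max N N0) - c)) with (l - c) in * by ring. lra.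
Qed.

Lemma sum_f_R0_single (u : nat -> R) j N : (j <= N)%nat ->
  (forall k, (k <= N)%nat -> k <> j -> u k = 0) -> sum_f_R0 u N = u j.
Proof.
  intros HjN Hz. induction N as [|N IH]; [replace j with 0%nat by lia; reflexivity|].
  simpl. destruct (Nat.eq_dec j (S N)) as [->|Hne].
  - rewrite (sum_eq_R0 u N) by (intros; apply Hz; lia). ring.
  - rewrite IH, (Hz (S N)) by (auto; lia). ring.
Qed.

Lemma Rabs_sum_mul_le (c v : nat -> R) E N : (forall k, (k <= N)%nat -> Rabs (v k) <= E) ->
  Rabs (sum_f_R0 (fun k => c k * v k) N) <= sum_f_R0 (fun k => Rabs (c k)) N * E.
Proof.
  intros Hv. eapply Rle_trans; [apply sum_f_R0_triangle|].
  rewrite Rmult_comm, scal_sum. apply sum_Rle. intros k Hk. rewrite Rabs_mult.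
  apply Rmult_le_compat_l; [apply Rabs_pos | auto].
Qed.

(** * Symmetric differences *)

(* Demodulating by [e^{-i be t}] at [t = t0 +- s] turns a term [c e^{i bk t}] of [F]
   into one proportional to [cos ((bk - be) s)], see [Cproj_mean_Cexpi]. *)
Definition sym_diff (w : Cx) (be t0 : R) (F : R -> Cx) (s : R) : R :=
  (Cproj w be (t0 + s) (Csub (F (t0 + s)) (F t0))
   + Cproj w be (t0 - s) (Csub (F (t0 - s)) (F t0))) / 2.



Lemma sym_diff_bound w be t0 F K s : (forall t, Cnorm (F t) <= K) ->
  Rabs (sym_diff w be t0 F s) <= 2 * Cnorm w * K.
Proof.
  intros HK. pose proof (Cnorm_ge0 w).
  assert (Hterm : forall t t', Rabs (Cproj w be t' (Csub (F t) (F t0))) <= 2 * Cnorm w * K).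
  { intros. eapply Rle_trans; [apply Cproj_bound|].
    pose proof (Cnorm_Csub_le (F t) (F t0)). pose proof (HK t). pose proof (HK t0).
    replace (2 * Cnorm w * K) with (Cnorm w * (K + K)) by ring.
    apply Rmult_le_compat_l; lra. }
  apply Rabs_half_sum_le; apply Hterm.
Qed.

Lemma sym_diff_sub_le w be t0 F G tau s : (forall t, Cnorm (Csub (F t) (G t)) <= tau) ->
  Rabs (sym_diff w be t0 F s - sym_diff w be t0 G s) <= 2 * Cnorm w * tau.
Proof.
  intros Ht.
  replace (sym_diff w be t0 F s - sym_diff w be t0 G s)
    with (sym_diff w be t0 (fun t => Csub (F t) (G t)) s)
    by (unfold sym_diff; rewrite !Cproj_Csub; field).
  apply sym_diff_bound, Ht.
Qed.

Lemma sym_diff_holder w be t0 F L eta alpha s :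
  (forall t, t0 - eta < t < t0 + eta ->
     Cnorm (Csub (F t) (F t0)) <= L * rpow (Rabs (t - t0)) alpha) ->
  0 < s < eta -> Rabs (sym_diff w be t0 F s) <= Cnorm w * (L * Rpower s alpha).
Proof.
  intros Hhol Hs. pose proof (Cnorm_ge0 w).
  assert (Hterm : forall t t', Rabs (t - t0) = s ->
            Rabs (Cproj w be t' (Csub (F t) (F t0))) <= Cnorm w * (L * Rpower s alpha)).
  { intros t t' Ht. eapply Rle_trans; [apply Cproj_bound|]. apply Rmult_le_compat_l; auto.
    rewrite <- Ht, <- rpow_Rpower by lra. apply Hhol.
    assert (Hlt : Rabs (t - t0) < eta) by lra. apply Rabs_def2 in Hlt. lra. }
  unfold sym_diff. apply Rabs_half_sum_le; apply Hterm.
  - replace (t0 + s - t0) with s by ring. apply Rabs_right. lra.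
  - replace (t0 - s - t0) with (- s) by ring. rewrite Rabs_Ropp. apply Rabs_right. lra.
Qed.

(** * Coefficients of a Hölder continuous series *)

Section HolderCoefficients.

Variables (a : nat -> Cx) (b : nat -> R) (f : R -> Cx) (t0 S0 : R).
Hypothesis b_pos : forall j, 0 < b j.
Hypothesis b_incr : forall j, b j < b (S j).
Hypothesis f_series : forall t, Ccv (Csum (fun j => Cmul (a j) (Cexpi (b j * t)))) (f t).
Hypothesis a_abs_series : Un_cv (sum_f_R0 (fun j => Cnorm (a j))) S0.

Let abs_sum N := sum_f_R0 (fun k => Cnorm (a k)) N.

Definition partial_sum N t := Csum (fun k => Cmul (a k) (Cexpi (b k * t))) N.

Lemma b_growing : Un_growing b.
Proof. intro j. left. apply b_incr. Qed.

Lemma abs_sum_le N : abs_sum N <= S0.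
Proof.
  apply growing_ineq; [|exact a_abs_series].
  intro M. unfold abs_sum. simpl. pose proof (Cnorm_ge0 (a (S M))). lra.
Qed.

Lemma Cnorm_a_le j : Cnorm (a j) <= S0.
Proof.
  eapply Rle_trans; [|apply (abs_sum_le j)]. unfold abs_sum. destruct j; simpl; [lra|].
  pose proof (cond_pos_sum (fun k => Cnorm (a k)) j (fun k => Cnorm_ge0 (a k))). lra.
Qed.

Lemma S0_nonneg : 0 <= S0.
Proof. pose proof (Cnorm_a_le 0). pose proof (Cnorm_ge0 (a 0%nat)). lra. Qed.

Lemma Cnorm_a_Rpower_le j alpha : 0 <= alpha <= 1 ->
  Cnorm (a j) * Rpower (Delta_b b j) alpha <= S0 * Rmax 1 (Delta_b b j).
Proof.
  intros Ha. destruct (Delta_b_pos_le b b_pos b_incr j) as [Hd _].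
  apply Rmult_le_compat; [apply Cnorm_ge0 | left; apply Rpower_pos | apply Cnorm_a_le |].
  apply Rpower_le_Rmax_1; auto.
Qed.

Lemma abs_sum_tail_small eps j : 0 < eps -> exists N, (j <= N)%nat /\ S0 - abs_sum N <= eps.
Proof.
  intros Heps. destruct (a_abs_series eps Heps) as [N0 HN0].
  exists (max N0 j). split; [lia|]. specialize (HN0 (max N0 j) ltac:(lia)).
  pose proof (abs_sum_le (max N0 j)). unfold R_dist, abs_sum in *.
  rewrite Rabs_left1 in HN0 by lra. lra.
Qed.

Lemma abs_sum_terms N t :
  sum_f_R0 (fun k => Cnorm (Cmul (a k) (Cexpi (b k * t)))) N = abs_sum N.
Proof. apply sum_eq. intros. rewrite Cnorm_Cmul, Cnorm_Cexpi. ring. Qed.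

Lemma Cnorm_partial_sum_le N t : Cnorm (partial_sum N t) <= S0.
Proof.
  eapply Rle_trans; [apply Cnorm_Csum_le|]. cbv beta. rewrite abs_sum_terms. apply abs_sum_le.
Qed.

Lemma Cnorm_f_sub_partial_sum N t :
  Cnorm (Csub (f t) (partial_sum N t)) <= 2 * (S0 - abs_sum N).
Proof.
  assert (Htail : forall M, (N <= M)%nat ->
            Cnorm (Csub (partial_sum M t) (partial_sum N t)) <= S0 - abs_sum N).
  { intros M HM. eapply Rle_trans; [apply Cnorm_Csum_sub_le; auto|].
    cbv beta. rewrite !abs_sum_terms. pose proof (abs_sum_le M). lra. }
  destruct (f_series t) as [Hfst Hsnd].
  assert (Rabs (fst (f t) - fst (partial_sum N t)) <= S0 - abs_sum N).
  { apply (Un_cv_dist_le _ _ _ _ N Hfst). intros M HM.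
    eapply Rle_trans; [|apply (Htail M HM)].
    apply (Rabs_fst_le_Cnorm (Csub (partial_sum M t) (partial_sum N t))). }
  assert (Rabs (snd (f t) - snd (partial_sum N t)) <= S0 - abs_sum N).
  { apply (Un_cv_dist_le _ _ _ _ N Hsnd). intros M HM.
    eapply Rle_trans; [|apply (Htail M HM)].
    apply (Rabs_snd_le_Cnorm (Csub (partial_sum M t) (partial_sum N t))). }
  eapply Rle_trans; [apply Cnorm_le_Rabs_fst_snd | simpl; lra].
Qed.

Lemma sym_diff_partial_sum w be N s :
  sym_diff w be t0 (partial_sum N) s =
  sum_f_R0 (fun k => Cproj w be t0 (Cmul (a k) (Cexpi (b k * t0))) * cos ((b k - be) * s)) N
  - Cproj w be t0 (partial_sum N t0) * cos (be * s).
Proof.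
  assert (Hmean : (Cproj w be (t0 + s) (partial_sum N (t0 + s))
                   + Cproj w be (t0 - s) (partial_sum N (t0 - s))) / 2
    = sum_f_R0 (fun k => Cproj w be t0 (Cmul (a k) (Cexpi (b k * t0))) * cos ((b k - be) * s)) N).
  { unfold partial_sum. induction N as [|N IH]; simpl; [apply Cproj_mean_Cexpi|].
    rewrite !Cproj_Cadd, <- IH, <- Cproj_mean_Cexpi. field. }
  unfold sym_diff. rewrite !Cproj_Csub, <- Hmean, <- Cproj_mean. field.
Qed.

Lemma RInt_sym_diff_partial_sum w be d x y N : 0 < x -> 0 < y ->
  ex_RInt (fun s => sym_diff w be t0 (partial_sum N) s * fejer d s) x y /\
  (RInt (fun s => sym_diff w be t0 (partial_sum N) s * fejer d s) x y : R) =
  sum_f_R0 (fun k => Cproj w be t0 (Cmul (a k) (Cexpi (b k * t0)))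
                     * RInt (fun s => cos ((b k - be) * s) * fejer d s) x y) N
  - Cproj w be t0 (partial_sum N t0) * RInt (fun s => cos (be * s) * fejer d s) x y.
Proof.
  intros Hx Hy.
  set (c := fun k => Cproj w be t0 (Cmul (a k) (Cexpi (b k * t0)))).
  set (D := Cproj w be t0 (partial_sum N t0)).
  destruct (RInt_sum_cos_fejer c (fun k => b k - be) d x y N Hx Hy) as [Hex Heq].
  assert (E : forall s, sym_diff w be t0 (partial_sum N) s * fejer d s =
     sum_f_R0 (fun k => c k * cos ((b k - be) * s)) N * fejer d s - D * (cos (be * s) * fejer d s))
    by (intros; rewrite sym_diff_partial_sum; unfold c, D; ring).
  assert (Hcos := ex_RInt_cos_fejer be d x y Hx Hy).
  split.
  - eapply ex_RInt_ext; [intros s _; symmetry; apply E|].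
    apply ex_RInt_minus_R, ex_RInt_scal_R; auto.
  - rewrite (RInt_ext_R _ _ _ _ (fun s _ => E s)), RInt_minus_R, Heq, RInt_scal_R;
      auto using ex_RInt_scal_R.
Qed.

Lemma sum_Cproj_tent j N : (j <= N)%nat ->
  sum_f_R0 (fun k => Cproj (a j) (b j) t0 (Cmul (a k) (Cexpi (b k * t0)))
                     * (fejer_const / 2 * tent (Delta_b b j) (b k - b j))) N
  = Cnorm (a j) ^ 2 * fejer_const * Delta_b b j.
Proof.
  intros HjN. destruct (Delta_b_pos_le b b_pos b_incr j) as [Hd _].
  rewrite (sum_f_R0_single _ j N HjN).
  - rewrite Rminus_diag, tent_0, Cproj_self by lra. field.
  - intros k _ Hkj.
    rewrite tent_far; [ring | lra | apply Delta_b_le_dist; auto using b_growing].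
Qed.

Lemma sum_Rabs_Cproj_le w be N :
  sum_f_R0 (fun k => Rabs (Cproj w be t0 (Cmul (a k) (Cexpi (b k * t0))))) N <= Cnorm w * S0.
Proof.
  apply Rle_trans with (sum_f_R0 (fun k => Cnorm w * Cnorm (a k)) N).
  - apply sum_Rle. intros k _. eapply Rle_trans; [apply Cproj_bound|].
    rewrite Cnorm_Cmul, Cnorm_Cexpi, Rmult_1_r. apply Rle_refl.
  - replace (sum_f_R0 (fun k => Cnorm w * Cnorm (a k)) N) with (Cnorm w * abs_sum N)
      by (unfold abs_sum; rewrite scal_sum; apply sum_eq; intros; ring).
    apply Rmult_le_compat_l; [apply Cnorm_ge0 | apply abs_sum_le].
Qed.

Lemma RInt_sym_diff_partial_sum_lower j N x y : (j <= N)%nat -> 0 < x <= y ->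
  Cnorm (a j) ^ 2 * fejer_const * Delta_b b j
  - 2 * Cnorm (a j) * S0 * ((b N + 2 * b j) ^ 2 * x + 4 / y)
  <= RInt (fun s => sym_diff (a j) (b j) t0 (partial_sum N) s * fejer (Delta_b b j) s) x y.
Proof.
  intros HjN Hxy.
  set (d := Delta_b b j). set (E := (b N + 2 * b j) ^ 2 * x + 4 / y). set (n := Cnorm (a j)).
  destruct (Delta_b_pos_le b b_pos b_incr j) as [Hd Hdb]. fold d in Hd, Hdb.
  destruct (RInt_sym_diff_partial_sum (a j) (b j) d x y N) as [_ ->]; try lra.
  set (c := fun k => Cproj (a j) (b j) t0 (Cmul (a k) (Cexpi (b k * t0)))).
  set (W := fun xi => RInt (fun s => cos (xi * s) * fejer d s) x y).
  assert (HW : forall xi, Rabs xi + d <= b N + 2 * b j ->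
                 Rabs (W xi - fejer_const / 2 * tent d xi) <= E).
  { intros xi Hxi. eapply Rle_trans; [apply RInt_cos_fejer_approx; lra|].
    apply Rplus_le_compat_r, Rmult_le_compat_r; [lra|].
    apply pow_incr. pose proof (Rabs_pos xi). lra. }
  assert (HbN : forall k, (k <= N)%nat -> b k <= b N)
    by (intros; apply tech9; auto using b_growing).
  assert (Hmain : sum_f_R0 (fun k => c k * (fejer_const / 2 * tent d (b k - b j))) N
                  = n ^ 2 * fejer_const * d) by (apply sum_Cproj_tent; auto).
  assert (Hsumc : sum_f_R0 (fun k => Rabs (c k)) N <= n * S0) by apply sum_Rabs_Cproj_le.
  assert (Herr : Rabs (sum_f_R0 (fun k => c k * (W (b k - b j)
                                     - fejer_const / 2 * tent d (b k - b j))) N)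
                 <= n * S0 * E).
  { assert (0 <= E) by (apply Rle_trans with (Rabs (W 0 - fejer_const / 2 * tent d 0));
      [apply Rabs_pos | apply HW; rewrite Rabs_R0; pose proof (b_pos N); lra]).
    eapply Rle_trans; [apply Rabs_sum_mul_le | apply Rmult_le_compat_r; auto].
    intros k Hk. apply HW. pose proof (HbN k Hk). pose proof (b_pos k).
    assert (Rabs (b k - b j) <= b k + b j) by (apply Rabs_le; lra). lra. }
  assert (HD : Rabs (Cproj (a j) (b j) t0 (partial_sum N t0) * W (b j)) <= n * S0 * E).
  { rewrite Rabs_mult. apply Rmult_le_compat; try apply Rabs_pos.
    - eapply Rle_trans; [apply Cproj_bound|].
      apply Rmult_le_compat_l; [apply Cnorm_ge0 | apply Cnorm_partial_sum_le].
    - replace (W (b j)) with (W (b j) - fejer_const / 2 * tent d (b j))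
        by (rewrite tent_far; [ring | lra | rewrite Rabs_right; lra]).
      apply HW. rewrite Rabs_right by lra. pose proof (HbN j HjN). lra. }
  rewrite (sum_eq _ (fun k => c k * (fejer_const / 2 * tent d (b k - b j))
                               + c k * (W (b k - b j) - fejer_const / 2 * tent d (b k - b j))))
    by (intros; unfold c, W; ring).
  rewrite sum_plus, Hmain. apply Rabs_le_between in Herr, HD.
  change (RInt (fun s => cos (b j * s) * fejer d s) x y) with (W (b j)). lra.
Qed.

Section HolderAtT0.

Variables (L eta alpha : R).
Hypothesis f_holder : forall t, t0 - eta < t < t0 + eta ->
  Cnorm (Csub (f t) (f t0)) <= L * rpow (Rabs (t - t0)) alpha.
Hypothesis alpha_range : 0 < alpha < 1.
Hypothesis L_pos : 0 < L.
Hypothesis eta_pos : 0 < eta.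

Lemma sym_diff_partial_sum_near w be N s : 0 < s < eta ->
  Rabs (sym_diff w be t0 (partial_sum N) s)
  <= Cnorm w * L * Rpower s alpha + 4 * Cnorm w * (S0 - abs_sum N).
Proof.
  intros Hs.
  pose proof (sym_diff_holder w be t0 f L eta alpha s f_holder Hs) as Hf.
  pose proof (sym_diff_sub_le w be t0 f (partial_sum N) _ s (Cnorm_f_sub_partial_sum N)) as Hsub.
  apply Rabs_le_between in Hf, Hsub. apply Rabs_le_between. lra.
Qed.

Lemma large_gap_estimate j N x y : (j <= N)%nat ->
  1 <= Delta_b b j -> 2 / eta <= Delta_b b j -> 0 < x < / Delta_b b j -> eta / 2 < y ->
  fejer_const * Cnorm (a j) * Rpower (Delta_b b j) alpha
  <= L * (1 / 2 + 2 / (1 - alpha)) + 10 * (S0 - abs_sum N) * Rpower (Delta_b b j) alpha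
     + 8 * S0 / eta + 2 * (S0 * ((b N + 2 * b j) ^ 2 * x + 4 / y)).
Proof.
  intros HjN Hd1 Hd2 Hx Hy.
  set (d := Delta_b b j) in *. set (A := Rpower d alpha). set (n := Cnorm (a j)).
  set (tau := S0 - abs_sum N). set (E := (b N + 2 * b j) ^ 2 * x + 4 / y).
  assert (Hn : 0 <= n) by apply Cnorm_ge0.
  assert (Htau : 0 <= tau) by (pose proof (abs_sum_le N); unfold tau; lra).
  assert (HS0 := S0_nonneg).
  assert (HE : 0 <= E).
  { assert (0 < 4 / y) by (apply Rdiv_lt_0_compat; lra). pose proof (pow2_ge_0 (b N + 2 * b j)).
    unfold E. nra. }
  assert (HA : 0 < A <= d).
  { split; [apply Rpower_pos|]. rewrite <- (Rmax_right 1 d) by lra. apply Rpower_le_Rmax_1; lra. }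
  assert (Hinv : / d <= eta / 2).
  { rewrite <- (Rinv_inv (eta / 2)). apply Rinv_le_contravar; [apply Rinv_0_lt_compat; lra|].
    replace (/ (eta / 2)) with (2 / eta) by (field; lra). lra. }
  apply (sandwich_cancel _ _ d _
           (RInt (fun s => sym_diff (a j) (b j) t0 (partial_sum N) s * fejer d s) x y));
    [auto | auto | nra | | |].
  - assert (0 < 2 / (1 - alpha)) by (apply Rdiv_lt_0_compat; lra).
    assert (0 <= 8 * S0 / eta) by (apply Rdiv_le_0_compat; lra). nra.
  - replace (2 * n * (S0 * E)) with (2 * n * S0 * E) by ring.
    apply RInt_sym_diff_partial_sum_lower; auto; lra.
  - replace (n * (L * (1 / 2 + 2 / (1 - alpha)) + 10 * tau * A + 8 * S0 / eta))
      with (n * L * (1 / 2 + 2 / (1 - alpha)) + 5 / 2 * (4 * n * tau) * A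
            + 2 * (2 * n * S0) / (eta / 2)) by (field; lra).
    apply RInt_mul_fejer_holder_bound; try nra; try lra.
    + intros u v Hu Hv. apply RInt_sym_diff_partial_sum; auto.
    + intros s Hs. apply sym_diff_partial_sum_near. lra.
    + intros s. apply sym_diff_bound. intros. apply Cnorm_partial_sum_le.
Qed.

Lemma large_gap_bound j : 1 <= Delta_b b j -> 2 / eta <= Delta_b b j ->
  fejer_const * Cnorm (a j) * Rpower (Delta_b b j) alpha
  <= L * (1 / 2 + 2 / (1 - alpha)) + 8 * S0 / eta.
Proof.
  intros Hd1 Hd2. set (A := Rpower (Delta_b b j) alpha).
  assert (HA : 0 < A) by apply Rpower_pos. pose proof S0_nonneg.
  apply (le_of_forall_le_add_eps _ _ (2 * S0 + 10 * A)); [lra|].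
  intros eps Heps.
  destruct (abs_sum_tail_small eps j Heps) as [N [HjN Htail]].
  destruct (exists_truncation ((b N + 2 * b j) ^ 2) (Delta_b b j) (eta / 2) eps)
    as [x [y [Hx [Hy HE]]]]; [apply pow2_ge_0 | lra | auto |].
  pose proof (large_gap_estimate j N x y HjN Hd1 Hd2 Hx Hy) as Hest. fold A in Hest.
  assert (S0 * ((b N + 2 * b j) ^ 2 * x + 4 / y) <= S0 * eps)
    by (apply Rmult_le_compat_l; lra).
  assert (10 * (S0 - abs_sum N) * A <= 10 * eps * A) by (apply Rmult_le_compat_r; lra).
  lra.
Qed.

End HolderAtT0.

End HolderCoefficients.

Theorem mainTheorem7
  (a : nat -> Cx) (b : nat -> R) (f : R -> Cx) (alpha t0 : R)
  (Ha : exists S, Un_cv (sum_f_R0 (fun j => Cnorm (a j))) S)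
  (Hbpos : forall j, 0 < b j)
  (Hbinc : forall j, b j < b (S j))
  (Hbinf : cv_infty b)
  (Hf : forall t, Ccv (Csum (fun j => Cmul (a j) (Cexpi (b j * t)))) (f t))
  (Halpha : 0 < alpha < 1)
  (Hhol : holder_at f alpha t0) :
  exists M, forall j, Cnorm (a j) * rpow (Delta_b b j) alpha <= M.
Proof.
  destruct Ha as [S0 HS]. destruct Hhol as [L [eta [HL [Heta Hhol]]]].
  set (d0 := Rmax 1 (2 / eta)).
  assert (Hd0 : 1 <= d0 /\ 2 / eta <= d0) by (split; [apply Rmax_l | apply Rmax_r]).
  set (K := L * (1 / 2 + 2 / (1 - alpha)) + 8 * S0 / eta).
  pose proof fejer_const_pos.
  assert (HS0 := S0_nonneg a S0 HS).
  assert (HK : 0 <= K / fejer_const).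
  { assert (0 < 2 / (1 - alpha)) by (apply Rdiv_lt_0_compat; lra).
    assert (0 <= 8 * S0 / eta) by (apply Rdiv_le_0_compat; lra).
    apply Rdiv_le_0_compat; unfold K; nra. }
  exists (S0 * d0 + K / fejer_const). intro j.
  destruct (Delta_b_pos_le b Hbpos Hbinc j) as [Hd _].
  rewrite rpow_Rpower by lra.
  assert (0 <= S0 * d0) by (apply Rmult_le_pos; lra).
  destruct (Rlt_le_dec (Delta_b b j) d0) as [Hsmall | Hlarge].
  - pose proof (Cnorm_a_Rpower_le a b S0 Hbpos Hbinc HS j alpha ltac:(lra)).
    assert (S0 * Rmax 1 (Delta_b b j) <= S0 * d0)
      by (apply Rmult_le_compat_l; [lra | apply Rmax_lub; lra]).
    lra.
  - pose proof (large_gap_bound a b f t0 S0 Hbpos Hbinc Hf HS L eta alpha Hhol Halpha HL Heta j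
                  ltac:(lra) ltac:(lra)) as Hbound.
    apply Rle_trans with (K / fejer_const); [|lra].
    apply Rmult_le_reg_l with fejer_const; [auto|].
    replace (fejer_const * (K / fejer_const)) with K by (field; lra).
    rewrite <- Rmult_assoc. exact Hbound.
Qed.
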